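(* Let $A=[D,\boldsymbol n,\dots,\boldsymbol n]\in\mathbb Z^{\ell\times(\ell+k)}$ be a Type I$_k$ weight matrix such that $V_A$ is a faithful $\mathbb T^\ell$-module, and write $\alpha=\alpha(A)$, $m_i=m_i(A)$, $\eta=\eta(A)$. Then the algebra of $\mathbb T^\ell$-invariant polynomials in $z_1,\dots,z_{\ell+k},\overline{z_1},\dots,\overline{z_{\ell+k}}$ with complex coefficients (equivalently, via real and imaginary parts, $\mathbb R[V_A]^{\mathbb T^\ell}$) is generated by: (1) the $\ell$ quadratics $r_i=z_i\overline{z_i}$, $1\le i\le\ell$; (2) the $k^2$ quadratics $p_{i,j}=z_{\ell+i}\overline{z_{\ell+j}}$, $1\le i,j\le k$; (3) the $\binom{\alpha+k-1}{k-1}$ monomials $q_{\boldsymbol s}=\prod_{i=1}^\ell z_i^{m_i}\prod_{i=1}^kz_{\ell+i}^{s_i}$ of degree $\eta$, for $\boldsymbol s=(s_1,\dots,s_k)\in\mathbb Z_{\ge0}^k$ with $\sum_is_i=\alpha$; (4) their conjugates $\overline{q_{\boldsymbol s}}$. Moreover, $\mathbb R[M_0(A)]$ (complexified) is generated by the images of the generators in (2), (3), (4).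
   Context: For $A=(a_{ij})\in\mathbb Z^{\ell\times n}$ with columns $\boldsymbol a_j$, $V_A=\mathbb C^n$ (coordinates $z_j$) with $\mathbb T^\ell$ acting by $z_j\mapsto\boldsymbol t^{\boldsymbol a_j}z_j$, $\boldsymbol t^{\boldsymbol a_j}=\prod_it_i^{a_{ij}}$; faithful = effective. Moment map $J_i=\tfrac12\sum_ja_{ij}z_j\overline{z_j}$, $Z_A=J_A^{-1}(0)$, $M_0(A)=Z_A/\mathbb T^\ell$, $\mathbb R[M_0(A)]=\mathbb R[V_A]^{\mathbb T^\ell}/(\text{invariant polynomials vanishing on }Z_A)$. Type I$_k$: $A=[D,\boldsymbol n,\dots,\boldsymbol n]$ ($k$ copies of $\boldsymbol n$) with $D=\operatorname{diag}(-a_1,\dots,-a_\ell)$, $a_i>0$, $\boldsymbol n=(n_1,\dots,n_\ell)^T$, $n_i>0$. $\alpha(A)=\operatorname{lcm}(a_1,\dots,a_\ell)$, $m_i(A)=n_i\alpha(A)/a_i$, $\beta(A)=\sum_im_i(A)$, $\eta(A)=\alpha(A)+\beta(A)$. *)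

From HB Require Import structures.
From mathcomp Require Import all_boot all_order all_algebra all_field.
Set Implicit Arguments. Unset Strict Implicit. Unset Printing Implicit Defensive.
Import Order.TTheory GRing.Theory Num.Theory.
Local Open Scope ring_scope.

(* Points of V_A = C^(l+k): coordinates z_j, j : 'I_(l+k).
   Coordinates 0..l-1 are z_1..z_l; coordinate rshift l i is z_(l+i+1). *)
Definition pt (l k : nat) := 'I_(l + k) -> algC.

(* Type I_k weight matrix A = [D, n, ..., n], D = diag(-a_1,...,-a_l). *)
Definition typeI_A (l k : nat) (a nn : 'I_l -> nat) (i : 'I_l) (j : 'I_(l + k)) : int :=
  match split j with
  | inl j' => if j' == i then - (a i)%:Z else 0
  | inr _ => (nn i)%:Z
  end.

Definition in_torus (l : nat) (t : 'I_l -> algC) : Prop := forall i, `|t i| = 1.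

Definition tchar (l N : nat) (A : 'I_l -> 'I_N -> int) (t : 'I_l -> algC) (j : 'I_N) : algC :=
  \prod_(i < l) (t i) ^ (A i j).

Definition tact (l N : nat) (A : 'I_l -> 'I_N -> int) (t : 'I_l -> algC) (z : 'I_N -> algC)
  : 'I_N -> algC := fun j => tchar A t j * z j.

Definition faithful (l N : nat) (A : 'I_l -> 'I_N -> int) : Prop :=
  forall t, in_torus t -> (forall j, tchar A t j = 1) -> forall i, t i = 1.

Inductive gen_alg (X : Type) (G : (X -> algC) -> Prop) : (X -> algC) -> Prop :=
| ga_gen f : G f -> gen_alg G f
| ga_const (c : algC) : gen_alg G (fun _ => c)
| ga_add f g : gen_alg G f -> gen_alg G g -> gen_alg G (fun x => f x + g x)
| ga_mul f g : gen_alg G f -> gen_alg G g -> gen_alg G (fun x => f x * g x)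
| ga_ext f g : (forall x, f x = g x) -> gen_alg G f -> gen_alg G g.

(* Polynomials in z_j and conj(z_j) with complex coefficients, as functions on C^N. *)
Definition coord_gen (N : nat) (f : ('I_N -> algC) -> algC) : Prop :=
  exists j : 'I_N, f = (fun z => z j) \/ f = (fun z => (z j)^*).

Definition is_poly (N : nat) (f : ('I_N -> algC) -> algC) : Prop :=
  gen_alg (@coord_gen N) f.

Definition torus_invariant (l N : nat) (A : 'I_l -> 'I_N -> int) (f : ('I_N -> algC) -> algC) : Prop :=
  forall t, in_torus t -> forall z, f (tact A t z) = f z.

(* Z_A = J_A^{-1}(0), J_i = 1/2 sum_j a_ij z_j conj(z_j) *)
Definition in_ZA (l N : nat) (A : 'I_l -> 'I_N -> int) (z : 'I_N -> algC) : Prop :=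
  forall i, (2%:R)^-1 * \sum_(j < N) (A i j)%:~R * (z j * (z j)^*) = 0.

Definition alphaA (l : nat) (a : 'I_l -> nat) : nat := \big[lcmn/1%N]_(i < l) a i.
Definition mA (l : nat) (a nn : 'I_l -> nat) (i : 'I_l) : nat := (nn i * alphaA a %/ a i)%N.
Definition etaA (l : nat) (a nn : 'I_l -> nat) : nat := (alphaA a + \sum_(i < l) mA a nn i)%N.

Definition gen_r (l k : nat) (i : 'I_l) : pt l k -> algC :=
  fun z => z (lshift k i) * (z (lshift k i))^*.
Definition gen_p (l k : nat) (i j : 'I_k) : pt l k -> algC :=
  fun z => z (rshift l i) * (z (rshift l j))^*.
Definition gen_q (l k : nat) (a nn : 'I_l -> nat) (s : 'I_k -> nat) : pt l k -> algC :=
  fun z => (\prod_(i < l) z (lshift k i) ^+ mA a nn i) * \prod_(i < k) z (rshift l i) ^+ s i.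
Definition gen_qbar (l k : nat) (a nn : 'I_l -> nat) (s : 'I_k -> nat) : pt l k -> algC :=
  fun z => (gen_q a nn s z)^*.

Definition gens234 (l k : nat) (a nn : 'I_l -> nat) (f : pt l k -> algC) : Prop :=
  (exists i j, f = gen_p i j) \/
  (exists s : 'I_k -> nat, (\sum_(i < k) s i)%N = alphaA a /\
     (f = gen_q a nn s \/ f = gen_qbar a nn s)).

Definition gens1234 (l k : nat) (a nn : 'I_l -> nat) (f : pt l k -> algC) : Prop :=
  (exists i, f = @gen_r l k i) \/ gens234 a nn f.

(* A polynomial in z and conj z is a finite linear combination of monomials
   z^u conj(z)^v, on which t in T^l acts by the character t^w(u,v), with
   weight w_i(u,v) = sum_j a_ij (u_j - v_j).  Averaging over the finite
   subgroup (mu_M)^l of T^l, for M exceeding all the weights that occur, shows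
   that an invariant polynomial is the sum of its weight-zero terms.  A
   weight-zero monomial is generated by induction on its degree: a factor
   z_i conj(z_i) (i <= l) or z_(l+j) conj(z_(l+j')) is a generator r_i or
   p_(j,j') whose cofactor again has weight zero.  Otherwise the monomial is
   holomorphic or antiholomorphic; a holomorphic one satisfies a_i u_i = n_i D,
   D its degree in the last k variables, so coprimality of a_i and n_i (which
   faithfulness forces) gives alpha | D and m_i <= u_i: some q_s divides it
   with a weight-zero cofactor.  Finally, on Z_A the moment map gives
   r_i = (n_i / a_i) sum_j p_(j,j), which eliminates the generators (1). *)
From HB Require Import structures.
From mathcomp Require Import all_boot all_order all_algebra all_field.
From mathcomp Require Import zify.
Import Order.TTheory GRing.Theory Num.Theory.
Set Implicit Arguments. Unset Strict Implicit. Unset Printing Implicit Defensive.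
Local Open Scope ring_scope.

Section GeneratedAlgebra.
Variables (X : Type) (G : (X -> algC) -> Prop).

Lemma gen_alg_eq f g : (forall x, f x = g x) -> gen_alg G g -> gen_alg G f.
Proof. by move=> e; apply: ga_ext => x; rewrite e. Qed.

Lemma gen_alg_sum (I : Type) (r : seq I) (F : I -> X -> algC) :
  (forall i, gen_alg G (F i)) -> gen_alg G (fun x => \sum_(i <- r) F i x).
Proof.
move=> hF; elim: r => [|i r IH].
  by apply: (gen_alg_eq _ (ga_const G 0)) => x; rewrite big_nil.
by apply: (gen_alg_eq _ (ga_add (hF i) IH)) => x; rewrite big_cons.
Qed.

Lemma gen_alg_conj f : (forall g, G g -> gen_alg G (fun x => (g x)^*)) ->
  gen_alg G f -> gen_alg G (fun x => (f x)^*).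
Proof.
move=> hG; elim=> {f} [f /hG //|c|f g _ hf _ hg|f g _ hf _ hg|f g e _ h].
- exact: ga_const.
- by apply: (gen_alg_eq _ (ga_add hf hg)) => x; rewrite rmorphD.
- by apply: (gen_alg_eq _ (ga_mul hf hg)) => x; rewrite rmorphM.
- by apply: (gen_alg_eq _ h) => x; rewrite e.
Qed.

End GeneratedAlgebra.

Section Monomials.
Variable N : nat.
Implicit Types (u v : 'I_N -> nat) (z : 'I_N -> algC).

Definition monomial u v z : algC := \prod_(j < N) (z j ^+ u j * (z j)^* ^+ v j).

Definition add_exp u v : 'I_N -> nat := fun j => (u j + v j)%N.
Definition sub_exp u v : 'I_N -> nat := fun j => (u j - v j)%N.
Definition unit_exp (b : 'I_N) : 'I_N -> nat := fun j => nat_of_bool (j == b).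
Definition zero_exp : 'I_N -> nat := fun _ => 0%N.
Definition degree u v : nat := \sum_(j < N) (u j + v j).

Lemma eq_monomial u v u' v' z : (forall j, u j = u' j) -> (forall j, v j = v' j) ->
  monomial u v z = monomial u' v' z.
Proof. by move=> hu hv; apply: eq_bigr => j _; rewrite hu hv. Qed.

Lemma monomial_add u1 v1 u2 v2 z :
  monomial (add_exp u1 u2) (add_exp v1 v2) z = monomial u1 v1 z * monomial u2 v2 z.
Proof.
rewrite /monomial -big_split /=; apply: eq_bigr => j _.
by rewrite /add_exp !exprD mulrACA.
Qed.

Lemma monomial0 z : monomial zero_exp zero_exp z = 1.
Proof. by rewrite /monomial big1 // => j _; rewrite mulr1. Qed.

Lemma monomial_conj u v z : (monomial u v z)^* = monomial v u z.
Proof.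
rewrite /monomial rmorph_prod; apply: eq_bigr => j _.
by rewrite rmorphM !rmorphXn /= conjCK mulrC.
Qed.

Lemma monomial_unit b c z :
  monomial (unit_exp b) (unit_exp c) z = z b * (z c)^*.
Proof.
rewrite /monomial big_split /= (bigD1 b) //= big1 => [|j /negPf nb]; last first.
  by rewrite /unit_exp nb.
rewrite (bigD1 c) //= big1 => [|j /negPf nc]; last by rewrite /unit_exp nc.
by rewrite /unit_exp !eqxx !mulr1 !expr1.
Qed.

Lemma monomial_unit_zero b z : monomial (unit_exp b) zero_exp z = z b.
Proof.
rewrite /monomial (bigD1 b) //= big1 => [|j /negPf nb]; last first.
  by rewrite /unit_exp nb mulr1.
by rewrite /unit_exp eqxx mulr1 expr1 mulr1.
Qed.

Lemma monomial_zero_unit b z : monomial zero_exp (unit_exp b) z = (z b)^*.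
Proof. by rewrite -monomial_conj monomial_unit_zero. Qed.

Lemma add_sub_exp u u1 : (forall j, u1 j <= u j)%N ->
  forall j, u j = add_exp u1 (sub_exp u u1) j.
Proof. by move=> h j; rewrite /add_exp /sub_exp subnKC. Qed.

Lemma eq_degree u v u' v' : (forall j, u j = u' j) -> (forall j, v j = v' j) ->
  degree u v = degree u' v'.
Proof. by move=> hu hv; apply: eq_bigr => j _; rewrite hu hv. Qed.

Lemma degree_add u1 v1 u2 v2 :
  degree (add_exp u1 u2) (add_exp v1 v2) = (degree u1 v1 + degree u2 v2)%N.
Proof. by rewrite /degree -big_split /=; apply: eq_bigr => j _; rewrite /add_exp; lia. Qed.

Lemma degree_swap u v : degree v u = degree u v.
Proof. by apply: eq_bigr => j _; rewrite addnC. Qed.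

Lemma unit_exp_le u b : (0 < u b)%N -> forall j, (unit_exp b j <= u j)%N.
Proof. by move=> ub j; rewrite /unit_exp; case: eqP => [->|]. Qed.

Lemma degree_unit (b c : 'I_N) : degree (unit_exp b) (unit_exp c) = 2%N.
Proof.
have sum_unit (d : 'I_N) : (\sum_(j < N) unit_exp d j)%N = 1%N.
  by rewrite (bigD1 d) //= big1 => [|j /negPf nd]; rewrite /unit_exp ?eqxx ?nd.
by rewrite /degree big_split /= !sum_unit.
Qed.

Lemma gen_alg_monomial0 (G : (('I_N -> algC) -> algC) -> Prop) u v :
  (forall j, u j = 0%N) -> (forall j, v j = 0%N) -> gen_alg G (monomial u v).
Proof.
move=> u0 v0; apply: (gen_alg_eq _ (ga_const G 1)) => z.
by rewrite (eq_monomial z u0 v0) monomial0.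
Qed.

Definition term := (algC * ('I_N -> nat) * ('I_N -> nat))%type.
Definition expansion (s : seq term) z := \sum_(x <- s) x.1.1 * monomial x.1.2 x.2 z.

Lemma poly_expansion f : is_poly f -> exists s, forall z, f z = expansion s z.
Proof.
rewrite /expansion; elim=> {f} [f [j [->|->]]|c|f g _ [s1 h1] _ [s2 h2]|
                                 f g _ [s1 h1] _ [s2 h2]|f g e _ [s h]].
- by exists [:: (1, unit_exp j, zero_exp)] => z; rewrite big_seq1 monomial_unit_zero mul1r.
- by exists [:: (1, zero_exp, unit_exp j)] => z; rewrite big_seq1 monomial_zero_unit mul1r.
- by exists [:: (c, zero_exp, zero_exp)] => z; rewrite big_seq1 monomial0 mulr1.
- by exists (s1 ++ s2) => z; rewrite big_cat h1 h2.
- exists [seq (x.1.1 * y.1.1, add_exp x.1.2 y.1.2, add_exp x.2 y.2) | x <- s1, y <- s2].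
  move=> z; rewrite big_allpairs_dep h1 h2 mulr_suml; apply: eq_bigr => x _.
  by rewrite mulr_sumr; apply: eq_bigr => y _; rewrite monomial_add mulrACA.
- by exists s => z; rewrite -e h.
Qed.

Lemma gen_alg_expansion (G : (('I_N -> algC) -> algC) -> Prop) (s : seq term) :
  (forall x, List.In x s -> gen_alg G (monomial x.1.2 x.2)) -> gen_alg G (expansion s).
Proof.
elim: s => [|x s IH] hs.
  by apply: (gen_alg_eq _ (ga_const G 0)) => z; rewrite /expansion big_nil.
apply: (gen_alg_eq (g := fun z => x.1.1 * monomial x.1.2 x.2 z + expansion s z)).
  by move=> z; rewrite /expansion big_cons.
apply: ga_add; last by apply: IH => y hy; apply: hs; right.
by apply: ga_mul; [exact: ga_const | apply: hs; left].
Qed.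

End Monomials.

(* The weight of z^u conj(z)^v for the torus action with weight matrix A:
   t acts on this monomial by the character prod_i t_i ^ weight u v i. *)
Section Weights.
Variables (l N : nat) (A : 'I_l -> 'I_N -> int).
Implicit Types (u v : 'I_N -> nat) (t : 'I_l -> algC).

Definition weight u v (i : 'I_l) : int := \sum_(j < N) A i j * ((u j)%:Z - (v j)%:Z).

Lemma eq_weight u v u' v' i : (forall j, u j = u' j) -> (forall j, v j = v' j) ->
  weight u v i = weight u' v' i.
Proof. by move=> hu hv; apply: eq_bigr => j _; rewrite hu hv. Qed.

Lemma weight_add u1 v1 u2 v2 i :
  weight (add_exp u1 u2) (add_exp v1 v2) i = weight u1 v1 i + weight u2 v2 i.
Proof.
rewrite /weight -big_split /=; apply: eq_bigr => j _.
by rewrite /add_exp -mulrDr !PoszD; congr (_ * _); lia.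
Qed.

Lemma weight_swap u v i : weight v u i = - weight u v i.
Proof. by rewrite /weight -sumrN; apply: eq_bigr => j _; rewrite -mulrN opprB. Qed.

Lemma weight_unit b c i : weight (unit_exp b) (unit_exp c) i = A i b - A i c.
Proof.
rewrite /weight; under eq_bigr => j _ do rewrite mulrBr.
rewrite sumrB (bigD1 b) //= big1 => [|j /negPf nb]; last by rewrite /unit_exp nb mulr0.
rewrite (bigD1 c) //= [X in _ - (_ + X)]big1 => [|j /negPf nc]; last first.
  by rewrite /unit_exp nc mulr0.
by rewrite /unit_exp !eqxx !mulr1 !addr0.
Qed.

Lemma torus_neq0 t i : in_torus t -> t i != 0.
Proof. by move=> ht; rewrite -normr_eq0 ht oner_eq0. Qed.

Lemma tchar_neq0 t j : in_torus t -> tchar A t j != 0.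
Proof. by move=> ht; apply/prodf_neq0 => i _; apply/expfz_neq0/torus_neq0. Qed.

(* On the unit circle conjugation is inversion, hence so on characters. *)
Lemma tchar_conj t j : in_torus t -> (tchar A t j)^* = (tchar A t j)^-1.
Proof.
move=> ht; rewrite /tchar rmorph_prod -prodfV; apply: eq_bigr => i _.
rewrite rmorphXz ?unitfE ?torus_neq0 //= expfV; congr (_ ^ _).
by rewrite invC_norm ht expr1n invr1 mul1r.
Qed.

Lemma monomial_act t u v z : in_torus t ->
  monomial u v (tact A t z) = (\prod_(i < l) t i ^ weight u v i) * monomial u v z.
Proof.
move=> ht; rewrite /monomial /tact.
have character_factor j : (tchar A t j * z j) ^+ u j * (tchar A t j * z j)^* ^+ v j
    = tchar A t j ^ ((u j)%:Z - (v j)%:Z) * (z j ^+ u j * (z j)^* ^+ v j).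
  rewrite rmorphM /= tchar_conj // !exprMn mulrACA; congr (_ * _).
  by rewrite expfzDr ?tchar_neq0 // -exprz_inv.
under eq_bigr => j _ do rewrite character_factor.
rewrite big_split /=; congr (_ * _).
under [RHS]eq_bigr => i _ do rewrite /weight
  (big_morph _ (fun m n => expfzDr m n (torus_neq0 i ht)) (expr0z _)).
rewrite exchange_big /=; apply: eq_bigr => j _.
rewrite /tchar (big_morph (fun x => x ^ _) (fun x y => expfzMl x y _) (exp1rz _ _)).
by apply: eq_bigr => i _; rewrite exprz_exp.
Qed.

End Weights.

(* Orthogonality of characters of the finite subgroup (mu_M)^l of T^l, for
   weights of absolute value below M. *)
Section RootsOfUnity.
Variables (M : nat) (zeta : algC).
Hypotheses (M_gt0 : (0 < M)%N) (zeta_prim : M.-primitive_root zeta).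

Lemma prim_root_norm : `|zeta| = 1.
Proof.
apply/eqP; rewrite -(pexpr_eq1 M_gt0) ?normr_ge0 // -normrX.
by rewrite (prim_expr_order zeta_prim) normr1.
Qed.

Lemma prim_root_expz_eq1 (w : int) : (`|w| < M)%N -> (zeta ^ w == 1) = (w == 0).
Proof.
move=> hw; apply/idP/idP => [|/eqP ->]; last by rewrite expr0z.
case: w hw => n hn /=.
  rewrite -exprnP -(prim_order_dvd zeta_prim) => /dvdnP [c hc].
  by apply/eqP; move: hn; rewrite hc; case: c {hc} => //= c; rewrite mulSn; lia.
rewrite NegzE -exprz_inv -exprnP exprVn invr_eq1 -(prim_order_dvd zeta_prim).
by move/dvdn_leq => /(_ isT); move: hn => /=; lia.
Qed.

Lemma sum_root_powers (w : int) : (`|w| < M)%N ->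
  \sum_(e < M) (zeta ^+ e) ^ w = if w == 0 then M%:R else 0.
Proof.
move=> hw; have := prim_root_expz_eq1 hw; case: (eqVneq w 0) => [-> _|_ x_neq1].
  by rewrite (eq_bigr (fun _ => 1)) ?sumr_const ?card_ord // => e _; rewrite expr0z.
have xM : (zeta ^ w) ^+ M = 1.
  by rewrite exprnP exprzAC -exprnP (prim_expr_order zeta_prim) exp1rz.
have : (zeta ^ w - 1) * \sum_(e < M) (zeta ^ w) ^+ e == 0.
  by rewrite -subrX1 xM subrr.
rewrite mulf_eq0 subr_eq0 x_neq1 /= => /eqP sum0; rewrite -[RHS]sum0.
by apply: eq_bigr => e _; rewrite exprnP exprzAC -exprnP.
Qed.

Lemma torus_average_character (l : nat) (w : 'I_l -> int) :
  (forall i, `|w i| < M)%N ->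
  \sum_(e : {ffun 'I_l -> 'I_M}) \prod_(i < l) (zeta ^+ e i) ^ w i
   = if [forall i, w i == 0] then M%:R ^+ l else 0.
Proof.
move=> hw; rewrite -(bigA_distr_bigA (fun i (e : 'I_M) => (zeta ^+ e) ^ w i)) /=.
under eq_bigr => i _ do rewrite sum_root_powers //.
case: ifP => [/forallP w0|/negbT].
  by rewrite (eq_bigr (fun _ => M%:R)) ?prodr_const ?card_ord // => i _; rewrite w0.
by rewrite negb_forall => /existsP [i /negPf wi]; rewrite (bigD1 i) //= wi mul0r.
Qed.

End RootsOfUnity.

(* Membership facts for lists over types without decidable equality, such as
   the lists of terms of an expansion. *)
Lemma leq_sum_In (T : Type) (s : seq T) (F : T -> nat) x :
  List.In x s -> (F x <= \sum_(y <- s) F y)%N.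
Proof.
elim: s => [//|y s IH] /= [->|/IH h]; rewrite big_cons; first exact: leq_addr.
exact: leq_trans h (leq_addl _ _).
Qed.

Lemma In_filter (T : Type) (P : pred T) (s : seq T) x :
  List.In x (filter P s) -> List.In x s /\ P x.
Proof.
elim: s => [//|y s IH] /=; case: ifP => Py /=; last by move/IH => [? ?]; split; [right|].
by case=> [<-|/IH [? ?]]; split; [left| |right|].
Qed.

Lemma eq_big_In (T : Type) (s : seq T) (F G : T -> algC) :
  (forall x, List.In x s -> F x = G x) -> \sum_(x <- s) F x = \sum_(x <- s) G x.
Proof.
elim: s => [|y s IH] h; first by rewrite !big_nil.
by rewrite !big_cons h /=; [rewrite IH // => x hx; apply: h; right | left].
Qed.

(* An invariant polynomial is the sum of its weight-zero terms: average its
   expansion over (mu_M)^l, with M exceeding every weight that occurs. *)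
Lemma invariant_expansion (l N : nat) (A : 'I_l -> 'I_N -> int) f :
  is_poly f -> torus_invariant A f ->
  exists s : seq (term N), (forall x, List.In x s -> forall i, weight A x.1.2 x.2 i = 0)
    /\ forall z, f z = expansion s z.
Proof.
move=> /poly_expansion [s0 f_s0] f_inv.
pose weight0 (x : term N) := [forall i, weight A x.1.2 x.2 i == 0].
exists (filter weight0 s0); split.
  by move=> x hx i; have [_ /forallP w0] := In_filter hx; apply/eqP; apply: w0.
pose M := (\sum_(x <- s0) \sum_(i < l) `|weight A x.1.2 x.2 i|).+1.
have weight_lt_M x i : List.In x s0 -> (`|weight A x.1.2 x.2 i| < M)%N.
  move=> hx; rewrite ltnS; apply: leq_trans (leq_sum_In _ hx).
  by rewrite (bigD1 i) //= leq_addr.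
have [zeta zeta_prim] := C_prim_root_exists (ltn0Sn _ : (0 < M)%N).
pose te (e : {ffun 'I_l -> 'I_M}) i := zeta ^+ e i.
have te_torus e : in_torus (te e).
  by move=> i; rewrite normrX (prim_root_norm (ltn0Sn _) zeta_prim) expr1n.
move=> z; have Ml_neq0 : (M%:R ^+ l : algC) != 0 by rewrite expf_neq0 // pnatr_eq0.
apply: (mulIf Ml_neq0).
have -> : f z * M%:R ^+ l = \sum_(e : {ffun 'I_l -> 'I_M}) f (tact A (te e) z).
  rewrite (eq_bigr (fun _ => f z)) => [|e _]; last by rewrite f_inv.
  by rewrite sumr_const card_ffun !card_ord -natrX mulr_natr.
under eq_bigr => e _ do rewrite f_s0 /expansion.
under eq_bigr => e _ do under eq_bigr => x _ do rewrite monomial_act //.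
rewrite exchange_big /= /expansion big_filter mulr_suml [in RHS]big_mkcond /=.
apply: eq_big_In => x hx.
under eq_bigr => e _ do rewrite mulrA mulrAC mulrC.
rewrite -mulr_suml /te (torus_average_character (ltn0Sn _) zeta_prim).
  by rewrite /weight0; case: ifP => _; rewrite ?mul0r // mulrC.
by move=> i; apply: weight_lt_M.
Qed.

Lemma sumz (k : nat) (F : 'I_k -> nat) : \sum_(j < k) (F j)%:Z = (\sum_(j < k) F j)%N%:Z.
Proof. by rewrite (big_morph Posz PoszD (erefl _)). Qed.

Definition weight_zero_generated (l N : nat) (A : 'I_l -> 'I_N -> int)
    (G : (('I_N -> algC) -> algC) -> Prop) (n : nat) : Prop :=
  forall u v, (degree u v <= n)%N -> (forall i, weight A u v i = 0) ->
    gen_alg G (monomial u v).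

Lemma gen_alg_factor (l N : nat) (A : 'I_l -> 'I_N -> int)
    (G : (('I_N -> algC) -> algC) -> Prop) (n : nat) u v u1 v1 :
  weight_zero_generated A G n ->
  (degree u v <= n.+1)%N -> (forall i, weight A u v i = 0) ->
  (forall j, u1 j <= u j)%N -> (forall j, v1 j <= v j)%N ->
  (0 < degree u1 v1)%N -> (forall i, weight A u1 v1 i = 0) ->
  gen_alg G (monomial u1 v1) -> gen_alg G (monomial u v).
Proof.
move=> IH deg_uv w_uv u1_le v1_le deg1_gt0 w1 gen1.
have eu := add_sub_exp u1_le; have ev := add_sub_exp v1_le.
apply: (gen_alg_eq (g := fun z => monomial u1 v1 z * monomial (sub_exp u u1) (sub_exp v v1) z)).
  by move=> z; rewrite (eq_monomial z eu ev) monomial_add.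
apply: ga_mul => //; apply: IH => [|i].
  by move: deg_uv; rewrite (eq_degree eu ev) degree_add; lia.
by have := w_uv i; rewrite (eq_weight A i eu ev) weight_add w1 add0r.
Qed.

Lemma exists_sub_sum (k : nat) (u : 'I_k -> nat) (m : nat) : (m <= \sum_(j < k) u j)%N ->
  exists s : 'I_k -> nat, (forall j, s j <= u j)%N /\ (\sum_(j < k) s j)%N = m.
Proof.
elim: m => [|m IH] hm; first by exists (fun _ => 0%N); split => //; rewrite big1.
have [s [s_le s_sum]] := IH (ltnW hm).
have [j0 hj0] : exists j0, (s j0 < u j0)%N.
  apply/existsP; apply: contraLR hm; rewrite negb_exists -leqNgt -s_sum => /forallP h.
  by apply: leq_sum => j _; rewrite leqNgt h.
exists (fun j => s j + (j == j0))%N; split.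
  by move=> j; case: eqP => [->|_]; rewrite ?addn1 ?addn0.
by rewrite big_split /= s_sum (bigD1 j0) //= eqxx big1 ?addn0 ?addn1 // => j /negPf ->.
Qed.

Lemma gen_alg_mixed (l N : nat) (A : 'I_l -> 'I_N -> int)
    (G : (('I_N -> algC) -> algC) -> Prop) (n : nat) u v b c :
  weight_zero_generated A G n ->
  (degree u v <= n.+1)%N -> (forall i, weight A u v i = 0) ->
  (0 < u b)%N -> (0 < v c)%N -> (forall i, A i b = A i c) ->
  gen_alg G (fun z => z b * (z c)^*) -> gen_alg G (monomial u v).
Proof.
move=> IH deg_uv w_uv ub vc Abc gen_bc.
apply: (gen_alg_factor IH deg_uv w_uv (unit_exp_le ub) (unit_exp_le vc)).
- by rewrite degree_unit.
- by move=> i; rewrite weight_unit Abc subrr.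
- by apply: (gen_alg_eq _ gen_bc) => z; rewrite monomial_unit.
Qed.

Section TypeI.
Variables (l k : nat) (a nn : 'I_l -> nat).
Hypotheses (a_gt0 : forall i, (0 < a i)%N) (n_gt0 : forall i, (0 < nn i)%N).
Local Notation A := (@typeI_A l k a nn).
Local Notation L i := (lshift k i).
Local Notation R j := (rshift l j).
Local Notation exp0 := (@zero_exp (l + k)%N).
Local Notation G := (@gens1234 l k a nn).
Implicit Types (u v : 'I_(l + k) -> nat).

Lemma ord_split_ind (P : 'I_(l + k) -> Prop) :
  (forall i, P (L i)) -> (forall j, P (R j)) -> forall j, P j.
Proof. by move=> hL hR j; rewrite -(splitK j); case: (split j). Qed.

Lemma typeI_A_left i i' : A i (L i') = if i' == i then - (a i)%:Z else 0.
Proof. by rewrite /typeI_A -[lshift k i']/(unsplit (inl i')) unsplitK. Qed.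

Lemma typeI_A_right i j : A i (R j) = (nn i)%:Z.
Proof. by rewrite /typeI_A -[rshift l j]/(unsplit (inr j)) unsplitK. Qed.

Lemma weight_typeI u v i : weight A u v i =
  - (a i)%:Z * ((u (L i))%:Z - (v (L i))%:Z)
  + (nn i)%:Z * \sum_(j < k) ((u (R j))%:Z - (v (R j))%:Z).
Proof.
rewrite /weight big_split_ord /= mulr_sumr; congr (_ + _).
  rewrite (bigD1 i) //= big1 ?addr0 => [|i' ne]; first by rewrite typeI_A_left eqxx.
  by rewrite typeI_A_left (negPf ne) mul0r.
by apply: eq_bigr => j _; rewrite typeI_A_right.
Qed.

Lemma alpha_gt0 : (0 < alphaA a)%N.
Proof.
by rewrite /alphaA; elim/big_ind: _ => // x y x_gt0 y_gt0; rewrite lcmn_gt0 x_gt0 y_gt0.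
Qed.

Lemma mA_eq i : (a i * mA a nn i = nn i * alphaA a)%N.
Proof. by rewrite /mA mulnC divnK // dvdn_mull // (biglcmn_sup i). Qed.

Definition qexp (s : 'I_k -> nat) (j : 'I_(l + k)) : nat :=
  match split j with inl i => mA a nn i | inr j' => s j' end.

Lemma qexp_left s i : qexp s (L i) = mA a nn i.
Proof. by rewrite /qexp -[lshift k i]/(unsplit (inl i)) unsplitK. Qed.

Lemma qexp_right s j : qexp s (R j) = s j.
Proof. by rewrite /qexp -[rshift l j]/(unsplit (inr j)) unsplitK. Qed.

Lemma monomial_qexp s z : monomial (qexp s) exp0 z = gen_q a nn s z.
Proof.
rewrite /monomial big_split_ord /gen_q; congr (_ * _); apply: eq_bigr => j _;
  by rewrite ?qexp_left ?qexp_right /zero_exp expr0 mulr1.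
Qed.

Section QGenerators.
Variable s : 'I_k -> nat.
Hypothesis s_sum : (\sum_(j < k) s j)%N = alphaA a.

Lemma weight_qexp i : weight A (qexp s) exp0 i = 0.
Proof.
rewrite weight_typeI.
have -> : \sum_(j < k) ((qexp s (R j))%:Z - (exp0 (R j))%:Z) = (alphaA a)%:Z.
  by rewrite -s_sum -sumz; apply: eq_bigr => j _; rewrite qexp_right subr0.
by rewrite qexp_left /zero_exp; have := mA_eq i; lia.
Qed.

Lemma degree_qexp : degree (qexp s) exp0 = etaA a nn.
Proof.
rewrite /degree /etaA big_split_ord -s_sum [RHS]addnC; congr (_ + _)%N;
  by apply: eq_bigr => j _; rewrite ?qexp_left ?qexp_right addn0.
Qed.

End QGenerators.

(* If no z_i conj(z_i) (i <= l) divides a weight-zero monomial and conj z has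
   exponent zero in the last k variables, then conj z is absent altogether:
   otherwise w_i = a_i v_i + n_i (nonnegative) would be positive. *)
Lemma antiholomorphic_part_vanishes u v :
  (forall i, ~~ ((0 < u (L i)) && (0 < v (L i))))%N -> (forall j, v (R j) = 0%N) ->
  (forall i, weight A u v i = 0) -> forall j, v j = 0%N.
Proof.
move=> no_mixed vR w0; apply: ord_split_ind => // i.
have := w0 i; rewrite weight_typeI.
have -> : \sum_(j < k) ((u (R j))%:Z - (v (R j))%:Z) = (\sum_(j < k) u (R j))%N%:Z.
  by rewrite -sumz; apply: eq_bigr => j _; rewrite vR subr0.
move: (no_mixed i) (a_gt0 i) (n_gt0 i).
by case: (u (L i)) => [|x]; case: (v (L i)) => [|y] //=; nia.
Qed.

Lemma unmixed_weight_zero u v :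
  (forall i, ~~ ((0 < u (L i)) && (0 < v (L i))))%N ->
  (forall j j', ~~ ((0 < u (R j)) && (0 < v (R j'))))%N ->
  (forall i, weight A u v i = 0) -> (forall j, v j = 0%N) \/ (forall j, u j = 0%N).
Proof.
move=> no_mixedL no_mixedR w0.
have [/existsP [j0 uj0]|/existsPn no_uR] := boolP [exists j, 0 < u (R j)]%N.
  left; apply: antiholomorphic_part_vanishes => // j.
  by apply/eqP; rewrite -leqn0 leqNgt; apply: contra (no_mixedR j0 j) => vj; rewrite uj0.
right; apply: antiholomorphic_part_vanishes => [i|j|i].
- by rewrite andbC.
- by apply/eqP; rewrite -leqn0 leqNgt no_uR.
- by rewrite weight_swap w0 oppr0.
Qed.

Lemma holomorphic_balance u i : (forall i, weight A u exp0 i = 0) ->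
  (a i * u (L i) = nn i * \sum_(j < k) u (R j))%N.
Proof.
move=> w0; have := w0 i; rewrite weight_typeI.
have -> : \sum_(j < k) ((u (R j))%:Z - (exp0 (R j))%:Z) = (\sum_(j < k) u (R j))%N%:Z.
  by rewrite -sumz; apply: eq_bigr => j _; rewrite subr0.
by rewrite /zero_exp; lia.
Qed.

Hypothesis coprime_an : forall i, coprime (a i) (nn i).

(* By coprimality alpha | D, and then m_i <= u_i: some q_s divides the
   monomial. *)
Lemma holomorphic_divisible u : (forall i, weight A u exp0 i = 0) ->
  (0 < \sum_(j < k) u (R j))%N ->
  exists s : 'I_k -> nat, (\sum_(j < k) s j)%N = alphaA a /\ forall j, (qexp s j <= u j)%N.
Proof.
set D := (\sum_(j < k) u (R j))%N => w0 D_gt0.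
have alpha_dvd : (alphaA a %| D)%N.
  apply/dvdn_biglcmP => i _.
  by rewrite -(Gauss_dvdr _ (coprime_an i)) -holomorphic_balance // dvdn_mulr.
have alpha_le : (alphaA a <= D)%N by apply: dvdn_leq.
have [s [s_le s_sum]] := exists_sub_sum alpha_le.
exists s; split => //; apply: ord_split_ind => [i|j]; last by rewrite qexp_right.
rewrite qexp_left -(leq_pmul2l (a_gt0 i)) mA_eq holomorphic_balance //.
by rewrite leq_mul2l alpha_le orbT.
Qed.

Lemma holomorphic_gen n u :
  weight_zero_generated A G n ->
  (degree u exp0 <= n.+1)%N -> (forall i, weight A u exp0 i = 0) ->
  gen_alg G (monomial u exp0).
Proof.
move=> IH deg_u w0.
have [D0|D_gt0] := posnP (\sum_(j < k) u (R j)).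
  apply: gen_alg_monomial0 => //; apply: ord_split_ind => [i|j].
    have /eqP := holomorphic_balance i w0; rewrite D0 muln0 muln_eq0.
    by rewrite (gtn_eqF (a_gt0 i)) => /eqP.
  by apply/eqP; rewrite -leqn0 -D0 (bigD1 j) //= leq_addr.
have [s [s_sum s_le]] := holomorphic_divisible w0 D_gt0.
apply: (gen_alg_factor IH deg_u w0 s_le (fun j => leqnn 0)).
- by rewrite degree_qexp // /etaA ltn_addr // alpha_gt0.
- exact: weight_qexp.
- apply: (gen_alg_eq (g := gen_q a nn s)); first exact: monomial_qexp.
  by apply: ga_gen; right; right; exists s; split => //; left.
Qed.

Lemma gens_conj g : G g -> gen_alg G (fun z => (g z)^*).
Proof.
case=> [[i ->]|[[i [j ->]]|[s [s_sum [->|->]]]]].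
- apply: (gen_alg_eq (g := gen_r i)); last by apply: ga_gen; left; exists i.
  by move=> z; rewrite /gen_r rmorphM /= conjCK mulrC.
- apply: (gen_alg_eq (g := gen_p j i)); last by apply: ga_gen; right; left; exists j, i.
  by move=> z; rewrite /gen_p rmorphM /= conjCK mulrC.
- by apply: ga_gen; right; right; exists s; split => //; right.
- apply: (gen_alg_eq (g := gen_q a nn s)); first by move=> z; rewrite /gen_qbar conjCK.
  by apply: ga_gen; right; right; exists s; split => //; left.
Qed.

Lemma weight_zero_gen n : weight_zero_generated A G n.
Proof.
elim: n => [|n IH] u v deg_uv w0.
  have uv0 j : (u j + v j = 0)%N.
    by apply/eqP; rewrite -leqn0 (leq_trans _ deg_uv) // /degree (bigD1 j) //= leq_addr.
  by apply: gen_alg_monomial0 => j; have := uv0 j; lia.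
have [/existsP [i /andP [ui vi]]|/existsPn no_mixedL] :=
  boolP [exists i, (0 < u (L i)) && (0 < v (L i))]%N.
  apply: (gen_alg_mixed IH deg_uv w0 ui vi) => //.
  by apply: ga_gen; left; exists i.
have [/existsP [j /existsP [j' /andP [uj vj']]]|no_mixedR] :=
  boolP [exists j, exists j', (0 < u (R j)) && (0 < v (R j'))]%N.
  apply: (gen_alg_mixed IH deg_uv w0 uj vj') => [i|]; first by rewrite !typeI_A_right.
  by apply: ga_gen; right; left; exists j, j'.
have no_mixedR' j j' : ~~ ((0 < u (R j)) && (0 < v (R j')))%N.
  by apply: contra no_mixedR => h; apply/existsP; exists j; apply/existsP; exists j'.
have [v0|u0] := unmixed_weight_zero no_mixedL no_mixedR' w0.
  apply: (gen_alg_eq (g := monomial u exp0)); first by move=> z; apply: eq_monomial.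
  apply: (holomorphic_gen IH); first by rewrite -(eq_degree (fun j => erefl) v0).
  by move=> i; rewrite -(eq_weight A i (fun j => erefl) v0).
apply: (gen_alg_eq (g := fun z => (monomial v exp0 z)^*)).
  by move=> z; rewrite monomial_conj; apply: eq_monomial.
apply: (gen_alg_conj gens_conj); apply: (holomorphic_gen IH).
  by rewrite degree_swap -(eq_degree u0 (fun j => erefl)).
move=> i; apply/eqP; rewrite -oppr_eq0 -weight_swap.
by rewrite -(eq_weight A i u0 (fun j => erefl)) w0.
Qed.

(* Faithfulness forces gcd(a_i, n_i) = 1: otherwise t_i = a primitive
   gcd-th root of unity, t_i' = 1 (i' <> i), acts trivially. *)
Lemma faithful_coprime : faithful A -> forall i, coprime (a i) (nn i).
Proof.
move=> faithA i; have g_gt0 : (0 < gcdn (a i) (nn i))%N by rewrite gcdn_gt0 a_gt0.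
have [zeta zeta_prim] := C_prim_root_exists g_gt0.
pose t i' := if i' == i then zeta else 1.
have t_torus : in_torus t.
  by move=> i'; rewrite /t; case: eqP => _; [exact: prim_root_norm zeta_prim | exact: normr1].
have zeta_exp1 m : (gcdn (a i) (nn i) %| m)%N -> zeta ^+ m = 1.
  by move=> hm; apply/eqP; rewrite -(prim_order_dvd zeta_prim).
have t_trivial : forall j, tchar A t j = 1.
  apply: ord_split_ind => [i'|j]; rewrite /tchar big1 // => i'' _.
    rewrite typeI_A_left /t; case: (eqVneq i'' i) => [->|_]; last exact: exp1rz.
    case: eqP => _; last exact: expr0z.
    by rewrite -exprnN zeta_exp1 ?invr1 // dvdn_gcdl.
  rewrite typeI_A_right /t; case: (eqVneq i'' i) => [->|_]; last exact: exp1rz.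
  by rewrite -exprnP zeta_exp1 // dvdn_gcdr.
have := faithA t t_torus t_trivial i; rewrite /t eqxx => zeta1.
by have := prim_order_dvd zeta_prim 1; rewrite zeta1 expr1 eqxx dvdn1.
Qed.

(* Each generator has weight zero, hence is invariant. *)
Lemma gens_invariant f : G f -> torus_invariant A f.
Proof.
have invariant_monomial u v : (forall i, weight A u v i = 0) ->
    torus_invariant A (monomial u v).
  by move=> w0 t ht z; rewrite monomial_act // big1 ?mul1r // => i _; rewrite w0 expr0z.
have invariant_unit b c : (forall i, A i b = A i c) ->
    torus_invariant A (fun z => z b * (z c)^*).
  move=> Abc t ht z; rewrite -[LHS]monomial_unit -[RHS]monomial_unit; apply: invariant_monomial => // i.
  by rewrite weight_unit Abc subrr.
case=> [[i ->]|[[i [j ->]]|[s [s_sum [->|->]]]]].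
- exact: invariant_unit.
- by apply: invariant_unit => i'; rewrite !typeI_A_right.
- by move=> t ht z; rewrite -!monomial_qexp; apply: invariant_monomial => //; apply: weight_qexp.
- move=> t ht z; rewrite /gen_qbar -!monomial_qexp; congr (_^*).
  by apply: invariant_monomial => //; apply: weight_qexp.
Qed.

(* On Z_A the i-th moment map equation reads a_i r_i = n_i sum_j p_(j,j). *)
Lemma gen_r_on_ZA i z : in_ZA A z ->
  gen_r i z = (nn i)%:R / (a i)%:R * \sum_(j < k) gen_p j j z.
Proof.
move=> /(_ i) /eqP; rewrite mulf_eq0 invr_eq0 pnatr_eq0 /= => /eqP moment0.
have a_neq0 : ((a i)%:R : algC) != 0 by rewrite pnatr_eq0 -lt0n a_gt0.
move: moment0; rewrite big_split_ord /= (bigD1 i) //= big1 ?addr0 => [|i' ne]; last first.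
  by rewrite typeI_A_left (negPf ne) mul0r.
rewrite typeI_A_left eqxx; under eq_bigr => j _ do rewrite typeI_A_right.
rewrite -mulr_sumr intrN mulNr addrC => /eqP; rewrite subr_eq0 => /eqP balance.
apply: (mulfI a_neq0); rewrite /gen_r /gen_p -balance mulrA mulrCA divff //.
by rewrite mulr1.
Qed.

Lemma gens1234_on_ZA h : gen_alg G h ->
  exists g, gen_alg (@gens234 l k a nn) g /\ forall z, in_ZA A z -> h z = g z.
Proof.
elim=> {h} [f [[i ->]|gen_f]|c|f g _ [f' [gf' ef']] _ [g' [gg' eg']]|
            f g _ [f' [gf' ef']] _ [g' [gg' eg']]|f g e _ [f' [gf' ef']]].
- exists (fun z => (nn i)%:R / (a i)%:R * \sum_(j < k) gen_p j j z); split.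
    apply/ga_mul/gen_alg_sum => [|j]; first exact: ga_const.
    by apply: ga_gen; left; exists j, j.
  by move=> z; apply: gen_r_on_ZA.
- by exists f; split => //; apply: ga_gen.
- by exists (fun _ => c); split => //; apply: ga_const.
- by exists (fun z => f' z + g' z); split; [apply: ga_add | move=> z hz; rewrite ef' ?eg'].
- by exists (fun z => f' z * g' z); split; [apply: ga_mul | move=> z hz; rewrite ef' ?eg'].
- by exists f'; split => // z hz; rewrite -e ef'.
Qed.

End TypeI.

Unset Implicit Arguments.

Theorem proposition4p1 (l k : nat) (a nn : 'I_l -> nat)
  (ha : forall i, (0 < a i)%N) (hn : forall i, (0 < nn i)%N)
  (hfaith : faithful (@typeI_A l k a nn)) :
  (forall f, gens1234 a nn f -> torus_invariant (@typeI_A l k a nn) f) /\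
  (forall f : pt l k -> algC, is_poly f -> torus_invariant (@typeI_A l k a nn) f ->
     gen_alg (gens1234 a nn) f) /\
  (forall f : pt l k -> algC, is_poly f -> torus_invariant (@typeI_A l k a nn) f ->
     exists g, gen_alg (gens234 a nn) g /\
       forall z, in_ZA (@typeI_A l k a nn) z -> f z = g z).
Proof.
have coprime_an := faithful_coprime ha hfaith.
have invariants_generated f : is_poly f -> torus_invariant (@typeI_A l k a nn) f ->
    gen_alg (gens1234 a nn) f.
  move=> f_poly f_inv; have [s [s_weight0 f_s]] := invariant_expansion f_poly f_inv.
  apply: (gen_alg_eq f_s); apply: gen_alg_expansion => x /s_weight0.
  exact: (weight_zero_gen ha hn coprime_an (leqnn _)).
split; first exact: gens_invariant.
split; first exact: invariants_generated.
by move=> f f_poly f_inv; apply: gens1234_on_ZA; [exact: ha | exact: invariants_generated].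
Qed.
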